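(* Let $X_1,\dots,X_n$ be real random variables with $\mathbb{E}|X_i|<\infty$, let $N,M$ be positive integers with $n\le M$, let $L\ge 0$, $\delta>0$, $K>0$, and set $A=1+LM/N$. Assume that for all $1\le i<\ell\le n$, almost surely $|\mathbb{E}_i(X_\ell)-\mathbb{E}_{i-1}(X_\ell\mid X_i=0)|\le L|X_i|/N$, and that for all $1\le i\le n$, $\mathbb{E}(e^{\delta A|X_i|}\mid\mathcal F_{i-1})\le K$ almost surely. Define the Doob martingale differences \[ d_i=\mathbb{E}_i(X_i+\cdots+X_n)-\mathbb{E}_{i-1}(X_i+\cdots+X_n),\qquad i=1,\dots,n. \] Then for every $i$, $\mathbb{E}_{i-1}(d_i)=0$, $S_n-\mathbb{E}S_n=\sum_{i=1}^n d_i$, and almost surely $\mathbb{E}_{i-1}\big(e^{\delta|d_i|}\big)\le K^2$.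
   Context: $\mathcal F_i=\sigma(X_1,\dots,X_i)$ with $\mathcal F_0$ trivial, $\mathbb{E}_i(\cdot)=\mathbb{E}(\cdot\mid\mathcal F_i)$, and $S_n=X_1+\cdots+X_n$. For $i<\ell$, writing $\mathbb{E}_i(X_\ell)=h_{i,\ell}(X_1,\dots,X_i)$ with $h_{i,\ell}$ measurable, $\mathbb{E}_{i-1}(X_\ell\mid X_i=0):=h_{i,\ell}(X_1,\dots,X_{i-1},0)$. *)

From HB Require Import structures.
From mathcomp Require Import all_boot all_order all_algebra.
From mathcomp Require Import all_classical all_reals all_analysis.
Set Implicit Arguments. Unset Strict Implicit. Unset Printing Implicit Defensive.
Import Order.TTheory GRing.Theory Num.Theory.
Local Open Scope classical_set_scope.
Local Open Scope ring_scope.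

Section defs.
Context {d : measure_display} {T : measurableType d} {R : realType}.

(* F_i = sigma(X_1, ..., X_i); F_0 is the trivial sigma-algebra {set0, setT}.
   Random variables are indexed from 1: X 1, ..., X n. *)
Definition Fsig (X : nat -> T -> R) (i : nat) : set (set T) :=
  g_sigma_preimage (fun j : 'I_i => X j.+1).

Definition F_measurable (F : set (set T)) (Y : T -> R) : Prop :=
  forall B : set R, measurable B -> F (Y @^-1` B).

Definition is_cond_exp (P : probability T R) (F : set (set T)) (Z Y : T -> R)
  : Prop :=
  [/\ F_measurable F Y,
      P.-integrable setT (EFin \o Y),
      P.-integrable setT (EFin \o Z) &
      forall A, F A ->
        (\int[P]_(x in A) (Y x)%:E = \int[P]_(x in A) (Z x)%:E)%E].

Definition vecX (X : nat -> T -> R) (i : nat) (w : T) : i.-tuple R :=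
  [tuple X j.+1 w | j < i].

Definition vecX0 (X : nat -> T -> R) (i : nat) (w : T) : i.-tuple R :=
  [tuple (if val j == i.-1 then 0 else X j.+1 w) | j < i].

Definition tailsum (X : nat -> T -> R) (i n : nat) (w : T) : R :=
  \sum_(i <= l < n.+1) X l w.

End defs.

(* Write d_i = U_i - V_i, where U_i and V_i are the given versions of E_i and
   E_{i-1} of X_i + ... + X_n.  The first two claims are bookkeeping: U_i and
   V_i have the same integral over every F_{i-1}-set, and almost surely
   U_i = X_i + V_{i+1}, U_n = X_n and V_1 = E S_n, so the d_i telescope.

   For the exponential moment let h_l(X_1, ..., X_i) = E_i X_l (l > i), and let
   H0 be the sum of the h_l(X_1, ..., X_{i-1}, 0), which is F_{i-1}-measurable.
   Then d_i = Z - W with Z = X_i + sum_l (h_l(..., X_i) - h_l(..., 0)) and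
   W = V_i - H0 = E_{i-1} Z.  The Lipschitz hypothesis gives |Z| <= A |X_i|
   (using n <= M), and a conditional Jensen inequality, obtained by integrating
   the tangent line of exp over the level sets {W > c}, gives
   exp(delta |W|) <= E_{i-1} exp(delta A |X_i|) <= K.  Hence
   E_{i-1} exp(delta |d_i|) <= K E_{i-1} exp(delta |Z|) <= K^2. *)

From HB Require Import structures.
From mathcomp Require Import all_boot all_order all_algebra.
From mathcomp Require Import all_classical all_reals all_analysis.
From mathcomp Require Import measurable_realfun ring.
Set Implicit Arguments. Unset Strict Implicit. Unset Printing Implicit Defensive.
Import Order.TTheory GRing.Theory Num.Theory.
Local Open Scope classical_set_scope.
Local Open Scope ring_scope.

Section integrable_EFin.
Context {d : measure_display} {T : measurableType d} {R : realType}.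
Variables (mu : {measure set T -> \bar R}) (D : set T).
Hypothesis mD : measurable D.

Lemma integrable_EFinD (f g : T -> R) :
  mu.-integrable D (EFin \o f) -> mu.-integrable D (EFin \o g) ->
  mu.-integrable D (EFin \o (fun x => f x + g x)).
Proof. by move=> If Ig; exact (integrableD mD If Ig). Qed.

Lemma integrable_EFinB (f g : T -> R) :
  mu.-integrable D (EFin \o f) -> mu.-integrable D (EFin \o g) ->
  mu.-integrable D (EFin \o (fun x => f x - g x)).
Proof. by move=> If Ig; exact (integrableB mD If Ig). Qed.

Lemma integrable_EFinZ (k : R) (f : T -> R) :
  mu.-integrable D (EFin \o f) -> mu.-integrable D (EFin \o (fun x => k * f x)).
Proof. by move=> If; exact (integrableZl mD k If). Qed.

Lemma integrable_EFin_sum (I : eqType) (s : seq I) (F : I -> T -> R) :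
  (forall l, l \in s -> mu.-integrable D (EFin \o F l)) ->
  mu.-integrable D (EFin \o (fun x => \sum_(l <- s) F l x)).
Proof.
elim: s => [|l s IH] IF.
  apply: (eq_integrable mD (fun _ => 0%E)); last exact: integrable0.
  by move=> x _; rewrite /= big_nil.
apply: (eq_integrable mD (EFin \o (fun x => F l x + \sum_(k <- s) F k x))).
  by move=> x _; rewrite /= big_cons.
apply: integrable_EFinD; first by apply: IF; rewrite mem_head.
by apply: IH => k ks; apply: IF; rewrite in_cons ks orbT.
Qed.

Lemma Rintegral_sum (I : eqType) (s : seq I) (F : I -> T -> R) :
  (forall l, l \in s -> mu.-integrable D (EFin \o F l)) ->
  \int[mu]_(x in D) (\sum_(l <- s) F l x) = \sum_(l <- s) \int[mu]_(x in D) F l x.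
Proof.
elim: s => [|l s IH] IF.
  rewrite big_nil (@eq_Rintegral _ _ _ mu D (fun _ => 0)) ?Rintegral_cst ?mul0r//.
  by move=> x _; rewrite big_nil.
have IFs k : k \in s -> mu.-integrable D (EFin \o F k).
  by move=> ks; apply: IF; rewrite in_cons ks orbT.
rewrite big_cons -IH // -RintegralD //; last 2 first.
- by apply: IF; rewrite mem_head.
- exact: integrable_EFin_sum.
by apply: eq_Rintegral => x _; rewrite big_cons.
Qed.

Lemma Rintegral_EFin (f : T -> R) : mu.-integrable D (EFin \o f) ->
  (\int[mu]_(x in D) (f x)%:E)%E = (\int[mu]_(x in D) f x)%:E.
Proof. by move=> If; rewrite /Rintegral fineK // integrable_fin_num. Qed.

Lemma ae_le_Rintegral (f g : T -> R) :
  mu.-integrable D (EFin \o f) -> mu.-integrable D (EFin \o g) ->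
  {ae mu, forall x, f x <= g x} ->
  \int[mu]_(x in D) f x <= \int[mu]_(x in D) g x.
Proof.
move=> If Ig fg; rewrite -subr_ge0 -RintegralB //.
have mf : measurable_fun D f by apply/measurable_EFinP; exact: measurable_int If.
have mg : measurable_fun D g by apply/measurable_EFinP; exact: measurable_int Ig.
rewrite /Rintegral.
rewrite (@ae_eq_integral _ _ _ mu D (fun x => (Num.max (g x - f x) 0)%:E)) //.
- apply: fine_ge0; apply: integral_ge0 => x _.
  by rewrite lee_fin le_max lexx orbT.
- by apply/measurable_EFinP; apply: measurable_funB.
- by apply/measurable_EFinP; apply: measurable_maxr => //; apply: measurable_funB.
- by apply: filterS fg => x fgx _; rewrite max_l // subr_ge0.
Qed.

End integrable_EFin.

Lemma integrable_ae_dominated {d : measure_display} {T : measurableType d}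
    {R : realType} (mu : {measure set T -> \bar R}) (f g : T -> R) :
  measurable_fun setT f -> {ae mu, forall x, `|f x| <= g x} ->
  mu.-integrable setT (EFin \o g) -> mu.-integrable setT (EFin \o f).
Proof.
move=> mf fg Ig; apply/integrableP; split; first exact/measurable_EFinP.
case/integrableP: Ig => mg; apply: le_lt_trans.
apply: ae_ge0_le_integral => //.
- by apply: measurableT_comp => //; exact/measurable_EFinP.
- exact: measurableT_comp.
- apply: filterS fg => x fgx _ /=; rewrite !lee_fin.
  exact: le_trans fgx (ler_norm _).
Qed.

Lemma ae_forall_nat_in {d : measure_display} {T : measurableType d}
    {R : realType} (mu : {measure set T -> \bar R}) (Q : nat -> T -> Prop)
    (a b : nat) :
  (forall l, (a <= l < b)%N -> {ae mu, forall x, Q l x}) ->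
  {ae mu, forall x, forall l, (a <= l < b)%N -> Q l x}.
Proof.
move=> HQ; apply: ae_foralln => l.
have [lab|/negP nlab] := boolP (a <= l < b)%N; last by apply: aeW.
by apply: filterS (HQ l lab) => x Qx _.
Qed.

Section sub_sigma_algebra.
Context {d : measure_display} {T : measurableType d} {R : realType}.
Variables (mu : {finite_measure set T -> \bar R}) (G : set (set T)).
Hypothesis sigmaG_measurable : <<s G >> `<=` measurable.
Local Notation TG := (g_sigma_algebraType G).

Lemma measurable_fun_sub_sigma (f : T -> R) :
  measurable_fun [set: TG] f -> measurable_fun [set: T] f.
Proof. by move=> mf _ B mB; apply: sigmaG_measurable; exact: mf. Qed.

Lemma sub_sigma_superlevel (f : T -> R) c :
  measurable_fun [set: TG] f -> <<s G >> [set x | c < f x].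
Proof.
move=> mf; have := mf measurableT `]c, +oo[%classic (measurable_itv _).
by rewrite setTI; congr (<<s G >> _); apply/seteqP; split => x /=;
  rewrite in_itv /= andbT.
Qed.

Lemma ae_le0_of_Rintegral_le0 (f : T -> R) :
  measurable_fun [set: TG] f -> mu.-integrable setT (EFin \o f) ->
  (forall B, <<s G >> B -> \int[mu]_(x in B) f x <= 0) ->
  {ae mu, forall x, f x <= 0}.
Proof.
move=> mf If f_le0.
pose B k := [set x | k.+1%:R^-1 < f x].
have GB k : <<s G >> (B k) by exact: sub_sigma_superlevel.
have mB k : measurable (B k) by exact: sigmaG_measurable.
have muB0 k : mu (B k) = 0%E.
  have IC : mu.-integrable (B k) (EFin \o cst (k.+1%:R^-1 : R)).
    exact: finite_measure_integrable_cst.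
  have IB : mu.-integrable (B k) (EFin \o f) by exact: integrableS If.
  have := le_Rintegral (mB k) IC IB (fun x (Bx : B k x) => ltW Bx).
  rewrite Rintegral_cst // => /le_trans /(_ (f_le0 _ (GB k))).
  rewrite pmulr_rle0 ?invr_gt0 // -lee_fin fineK ?fin_num_measure // => mu_le0.
  by apply/eqP; rewrite -measure_le0.
have nB k : mu.-negligible (B k) by exists (B k); split.
apply: (negligibleS _ (negligible_bigcup nB)).
move=> x /= /negP; rewrite -ltNge => fx_gt0.
have [k hk] := ltr_add_invr fx_gt0.
by exists k => //; rewrite /B /= -[_^-1]add0r.
Qed.

Lemma ae_le_of_Rintegral_le (f g : T -> R) :
  measurable_fun [set: TG] f -> measurable_fun [set: TG] g ->
  mu.-integrable setT (EFin \o f) -> mu.-integrable setT (EFin \o g) ->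
  (forall B, <<s G >> B -> \int[mu]_(x in B) f x <= \int[mu]_(x in B) g x) ->
  {ae mu, forall x, f x <= g x}.
Proof.
move=> mf mg If Ig fg.
have : {ae mu, forall x, f x - g x <= 0}.
  apply: ae_le0_of_Rintegral_le0; first exact: measurable_funB.
    exact: integrable_EFinB.
  move=> B GB; have mB := sigmaG_measurable GB.
  rewrite RintegralB ?subr_le0 ?fg //.
  - exact: integrableS If.
  - exact: integrableS Ig.
by apply: filterS => x; rewrite subr_le0.
Qed.

Lemma ae_eq_of_Rintegral_eq (f g : T -> R) :
  measurable_fun [set: TG] f -> measurable_fun [set: TG] g ->
  mu.-integrable setT (EFin \o f) -> mu.-integrable setT (EFin \o g) ->
  (forall B, <<s G >> B -> \int[mu]_(x in B) f x = \int[mu]_(x in B) g x) ->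
  {ae mu, forall x, f x = g x}.
Proof.
move=> mf mg If Ig fg.
have fleg : {ae mu, forall x, f x <= g x}.
  by apply: ae_le_of_Rintegral_le => // B GB; rewrite fg.
have glef : {ae mu, forall x, g x <= f x}.
  by apply: ae_le_of_Rintegral_le => // B GB; rewrite fg.
by apply: filterS2 fleg glef => x xy yx; apply/eqP; rewrite eq_le xy yx.
Qed.

Section expR_jensen.
Variables (g Y : T -> R) (delta K : R).
Hypotheses (delta_gt0 : 0 < delta) (K_gt0 : 0 < K).
Hypothesis IY : mu.-integrable setT (EFin \o Y).
Hypothesis Ieg : mu.-integrable setT (EFin \o (fun x => expR (delta * g x))).
Hypothesis Y_cond_eg : forall B, <<s G >> B ->
  \int[mu]_(x in B) Y x = \int[mu]_(x in B) expR (delta * g x).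
Hypothesis Y_le_K : {ae mu, forall x, Y x <= K}.

Lemma cond_exp_superlevel_null (W Z : T -> R) c : K < expR (delta * c) ->
  measurable_fun [set: TG] W ->
  mu.-integrable setT (EFin \o W) -> mu.-integrable setT (EFin \o Z) ->
  {ae mu, forall x, Z x <= g x} ->
  (forall B, <<s G >> B -> \int[mu]_(x in B) W x = \int[mu]_(x in B) Z x) ->
  mu [set x | c < W x] = 0%E.
Proof.
move=> Ke mW IW IZ Zg W_cond_Z.
pose B := [set x | c < W x].
have mB : measurable B by apply: sigmaG_measurable; exact: sub_sigma_superlevel.
have GB : <<s G >> B by exact: sub_sigma_superlevel.
pose p := fine (mu B); set e := expR (delta * c).
have IS f : mu.-integrable setT (EFin \o f) -> mu.-integrable B (EFin \o f).
  by move=> If; exact: integrableS If.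
have IC r : mu.-integrable B (EFin \o cst r).
  exact: finite_measure_integrable_cst.
have RC r : \int[mu]_(x in B) r = r * p by rewrite Rintegral_cst.
have YB : \int[mu]_(x in B) Y x <= K * p.
  by rewrite -(RC K); exact: (ae_le_Rintegral mB (IS _ IY) (IC K)).
(* [expR] lies above its tangent line at [delta * c] *)
have Y_ge_tangent : e * p + e * delta * (\int[mu]_(x in B) W x - c * p)
    <= \int[mu]_(x in B) Y x.
  have IZc : mu.-integrable B (EFin \o (fun x => Z x - c)).
    by apply: integrable_EFinB => //; [exact: IS|exact: IC].
  have ItanZ : mu.-integrable B (EFin \o (fun x => e + e * delta * (Z x - c))).
    by apply: integrable_EFinD => //; [exact: IC|exact: integrable_EFinZ].
  rewrite Y_cond_eg // W_cond_Z // -(RC c) -RintegralB //; [|exact: IS|exact: IC].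
  rewrite -RintegralZl // -(RC e) -RintegralD //;
    [|exact: IC|exact: integrable_EFinZ].
  apply: (ae_le_Rintegral mB ItanZ (IS _ Ieg)).
  apply: filterS Zg => x Zgx.
  have := expR_ge1Dx (delta * (Z x - c)).
  rewrite -(ler_pM2l (expR_gt0 (delta * c))) -expRD => tan.
  apply: le_trans (le_trans _ tan) _.
    by rewrite -/e [leRHS]mulrDr mulr1 mulrA.
  by rewrite ler_expR mulrBr addrC subrK ler_pM2l.
have WB : c * p <= \int[mu]_(x in B) W x.
  rewrite -RC; apply: (le_Rintegral mB (IC c) (IS _ IW)).
  by move=> x Bx; apply: ltW.
have epKp : e * p <= K * p.
  apply: le_trans YB; apply: le_trans Y_ge_tangent; rewrite lerDl.
  by rewrite !mulr_ge0 ?subr_ge0 ?expR_ge0 // ltW.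
have p0 : p = 0.
  apply/eqP; rewrite eq_le fine_ge0 // andbT.
  by apply: contraTT epKp; rewrite -!ltNge => p_gt0; rewrite ltr_pM2r.
by rewrite -(fineK (fin_num_measure mu B mB)) -/p p0.
Qed.

Lemma cond_exp_le_ln (W Z : T -> R) :
  measurable_fun [set: TG] W ->
  mu.-integrable setT (EFin \o W) -> mu.-integrable setT (EFin \o Z) ->
  {ae mu, forall x, Z x <= g x} ->
  (forall B, <<s G >> B -> \int[mu]_(x in B) W x = \int[mu]_(x in B) Z x) ->
  {ae mu, forall x, W x <= ln K / delta}.
Proof.
move=> mW IW IZ Zg W_cond_Z.
have W_le k : {ae mu, forall x, W x <= ln K / delta + k.+1%:R^-1}.
  set c := ln K / delta + _.
  have Kc : K < expR (delta * c).
    rewrite -[X in X < _](lnK (x := K)) ?posrE // ltr_expR /c mulrDr.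
    by rewrite mulrC divfK ?gt_eqF // ltrDl mulr_gt0 // invr_gt0.
  exists [set x | c < W x]; split.
  - by apply: sigmaG_measurable; exact: sub_sigma_superlevel.
  - exact: cond_exp_superlevel_null Kc mW IW IZ Zg W_cond_Z.
  - by move=> x /= /negP; rewrite -ltNge.
apply: filterS (ae_foralln W_le) => x Wx; rewrite leNgt; apply/negP => Wc.
have [k Wk] := ltr_add_invr Wc.
by have := Wx k; rewrite leNgt Wk.
Qed.

Lemma cond_exp_expR_norm_le (W Z : T -> R) :
  measurable_fun [set: TG] W ->
  mu.-integrable setT (EFin \o W) -> mu.-integrable setT (EFin \o Z) ->
  {ae mu, forall x, `|Z x| <= g x} ->
  (forall B, <<s G >> B -> \int[mu]_(x in B) W x = \int[mu]_(x in B) Z x) ->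
  {ae mu, forall x, expR (delta * `|W x|) <= K}.
Proof.
move=> mW IW IZ Zg W_cond_Z.
have W_le : {ae mu, forall x, W x <= ln K / delta}.
  apply: (cond_exp_le_ln mW IW IZ) => //.
  by apply: filterS Zg => x; apply: le_trans (ler_norm _).
have NW_le : {ae mu, forall x, -1 * W x <= ln K / delta}.
  apply: (cond_exp_le_ln (Z := fun x => -1 * Z x)).
  - by apply: measurable_funM => //; exact: measurable_cst.
  - exact: integrable_EFinZ.
  - exact: integrable_EFinZ.
  - by apply: filterS Zg => x; apply: le_trans; rewrite mulN1r -normrN ler_norm.
  - move=> B GB; have mB := sigmaG_measurable GB.
    rewrite !RintegralZl ?W_cond_Z //.
    + exact: integrableS IZ.
    + exact: integrableS IW.
apply: filterS2 W_le NW_le => x Wx NWx.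
rewrite -[K](lnK (x := K)) ?posrE // ler_expR -ler_pdivlMl // mulrC.
by case: (ler0P (W x)) => _; rewrite // -mulN1r.
Qed.

End expR_jensen.

End sub_sigma_algebra.

Section filtration.
Context {d : measure_display} {T : measurableType d} {R : realType}.
Variable X : nat -> T -> R.

Definition filtration_gen (i : nat) : set (set T) :=
  \big[setU/set0]_(j < i) preimage_set_system setT (X j.+1) measurable.

(* [Fsig X i] unfolds to [<<s filtration_gen i >>], the measurable sets of
   [Fspace i]. *)
Definition Fspace (i : nat) := g_sigma_algebraType (filtration_gen i).

Lemma F_measurableP i (f : T -> R) :
  F_measurable (Fsig X i) f <-> measurable_fun [set: Fspace i] f.
Proof.
split=> [mf _ B mB|mf B mB]; first by rewrite setTI; exact: mf.
by have := mf measurableT B mB; rewrite setTI.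
Qed.

Lemma measurable_X_Fspace i j : (j < i)%N ->
  measurable_fun [set: Fspace i] (X j.+1).
Proof.
move=> ji _ B mB; apply: sub_sigma_algebra.
case: i ji => // i ji.
rewrite /filtration_gen -bigcup_mkord_ord; exists j => //.
by exists B => //; rewrite inordK.
Qed.

Lemma measurable_Xi_Fspace i : (1 <= i)%N -> measurable_fun [set: Fspace i] (X i).
Proof.
move=> i_ge1; have := @measurable_X_Fspace i i.-1.
by rewrite prednK // => /(_ (leqnn i)).
Qed.

Lemma Fsig_measurable n i :
  (forall j, (1 <= j <= n)%N -> measurable_fun setT (X j)) -> (i <= n)%N ->
  Fsig X i `<=` measurable.
Proof.
move=> mX i_le_n; apply: smallest_sub; first exact: sigma_algebra_measurable.
rewrite /filtration_gen; elim/big_ind: _ => //.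
- by move=> A B HA HB C [/HA|/HB].
- move=> j _ C [B mB <-]; rewrite setTI.
  have := mX j.+1 (leq_trans (ltn_ord j) i_le_n) measurableT B mB.
  by rewrite setTI.
Qed.

Lemma Fsig_mono i j : (i <= j)%N -> Fsig X i `<=` Fsig X j.
Proof.
move=> ij; apply: smallest_sub; first exact: smallest_sigma_algebra.
rewrite /filtration_gen; elim/big_ind: _ => //.
- by move=> A B HA HB C [/HA|/HB].
- move=> k _ C [B mB <-]; rewrite setTI.
  have := measurable_X_Fspace (leq_trans (ltn_ord k) ij) measurableT mB.
  by rewrite setTI.
Qed.

Lemma Fsig0 A : Fsig X 0 A -> A = set0 \/ A = setT.
Proof.
move=> F0A.
have trivial_sigma : sigma_algebra setT [set B : set T | B = set0 \/ B = setT].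
  split.
  - by left.
  - by move=> B [->|->]; [right; rewrite setD0|left; rewrite setDv].
  - move=> F F_triv; have [[k Fk]|] := pselect (exists k, F k = setT).
      by right; apply/seteqP; split => // x _; exists k => //; rewrite Fk.
    move=> /forallNP F_neqT; left; apply/seteqP; split => // x [k _].
    by case: (F_triv k) => [->//|/F_neqT].
by apply: (smallest_sub trivial_sigma _ F0A); rewrite /filtration_gen big_ord0.
Qed.

Lemma measurable_vecX i : measurable_fun [set: Fspace i] (vecX X i).
Proof.
apply/measurable_fun_tnthP => j.
have -> : (fun t : i.-tuple R => tnth t j) \o vecX X i = X j.+1.
  by apply/funext => w; rewrite /comp /vecX tnth_mktuple.
exact: measurable_X_Fspace.
Qed.

Lemma measurable_vecX0 i : measurable_fun [set: Fspace i.-1] (vecX0 X i).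
Proof.
apply/measurable_fun_tnthP => j.
have -> : (fun t : i.-tuple R => tnth t j) \o vecX0 X i =
    (fun w => if val j == i.-1 then 0 else X j.+1 w).
  by apply/funext => w; rewrite /comp /vecX0 tnth_mktuple.
case: eqP => [_|j_neq]; first exact: measurable_cst.
apply: measurable_X_Fspace; case: i j j_neq => [[]//|i j /= j_neq].
by have := ltn_ord j; rewrite ltnS leq_eqVlt => /orP[/eqP|].
Qed.

End filtration.

Lemma cond_exp_Rintegral {d : measure_display} {T : measurableType d}
    {R : realType} (P : probability T R) (F : set (set T)) (Z Y : T -> R) B :
  is_cond_exp P F Z Y -> F B ->
  \int[P]_(x in B) Y x = \int[P]_(x in B) Z x.
Proof. by case=> _ _ _ YZ FB; rewrite /Rintegral YZ. Qed.

Lemma telescope_increments {V : zmodType} (n : nat) (x u v : nat -> V) (c : V) :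
  (0 < n)%N -> (forall i, (1 <= i < n)%N -> u i = x i + v i.+1) ->
  u n = x n -> v 1%N = c ->
  \sum_(1 <= i < n.+1) x i - c = \sum_(1 <= i < n.+1) (u i - v i).
Proof.
move=> n_gt0 u_step u_last v_first.
pose v' j := if (j <= n)%N then v j else 0.
rewrite [RHS](eq_big_nat _ _ (F2 := fun i => x i + (v' i.+1 - v' i))); last first.
  move=> i /andP[i_ge1]; rewrite ltnS leq_eqVlt => /orP[/eqP->|i_lt_n].
    by rewrite u_last /v' ltnn leqnn sub0r.
  by rewrite u_step ?i_ge1 // /v' i_lt_n ltnW // addrA.
by rewrite big_split /= telescope_sumr // /v' ltnn n_gt0 sub0r v_first.
Qed.

Section doob_decomposition.
Context {d : measure_display} {T : measurableType d} {R : realType}.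
Variables (P : probability T R) (X : nat -> T -> R) (n : nat).
Variables (U V : nat -> T -> R).
Hypothesis mX : forall i, (1 <= i <= n)%N -> measurable_fun setT (X i).
Hypothesis IX : forall i, (1 <= i <= n)%N -> P.-integrable setT (EFin \o X i).
Hypothesis HU : forall i, (1 <= i <= n)%N ->
  is_cond_exp P (Fsig X i) (tailsum X i n) (U i).
Hypothesis HV : forall i, (1 <= i <= n)%N ->
  is_cond_exp P (Fsig X i.-1) (tailsum X i n) (V i).

Let Fsig_meas i : (i <= n)%N -> Fsig X i `<=` measurable.
Proof. exact: Fsig_measurable mX. Qed.

Lemma integrable_tailsum i : (1 <= i)%N ->
  P.-integrable setT (EFin \o tailsum X i n).
Proof.
move=> i_ge1; apply: integrable_EFin_sum => // l.
rewrite mem_index_iota => /andP[il ln].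
by apply: IX; rewrite (leq_trans i_ge1 il).
Qed.

Lemma tailsum_recl i : (i <= n)%N ->
  tailsum X i n =1 (fun w => X i w + tailsum X i.+1 n w).
Proof. by move=> i_le_n w; rewrite /tailsum big_ltn. Qed.

Lemma doob_increment_cond_exp0 i : (1 <= i <= n)%N ->
  is_cond_exp P (Fsig X i.-1) (fun w => U i w - V i w) (fun _ => 0).
Proof.
move=> iH; have /andP[_ i_le_n] := iH.
have [_ IU _ _] := HU iH; have [_ IV _ _] := HV iH.
split.
- by apply/F_measurableP; exact: measurable_cst.
- exact: finite_measure_integrable_cst.
- exact: integrable_EFinB.
move=> B FB; have FiB : Fsig X i B by exact: Fsig_mono (leq_pred i) _ FB.
have mB : measurable B by exact: Fsig_meas i_le_n _ FiB.
rewrite !Rintegral_EFin //; last 2 first.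
- by apply: integrable_EFinB => //; [exact: integrableS IU|exact: integrableS IV].
- exact: finite_measure_integrable_cst.
rewrite Rintegral_cst // mul0r RintegralB //;
  [|exact: integrableS IU|exact: integrableS IV].
by rewrite (cond_exp_Rintegral (HU iH) FiB) (cond_exp_Rintegral (HV iH) FB) subrr.
Qed.

Lemma doob_U_step i : (1 <= i < n)%N ->
  {ae P, forall w, U i w = X i w + V i.+1 w}.
Proof.
move=> /andP[i_ge1 i_lt_n].
have iH : (1 <= i <= n)%N by rewrite i_ge1 ltnW.
have i1H : (1 <= i.+1 <= n)%N by rewrite i_lt_n.
have [mU IU _ _] := HU iH; have [mV IV Itail _] := HV i1H.
apply: (ae_eq_of_Rintegral_eq (Fsig_meas (ltnW i_lt_n))).
- exact/F_measurableP.
- apply: measurable_funD; last exact/F_measurableP.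
  exact: measurable_Xi_Fspace.
- exact: IU.
- exact: integrable_EFinD (IX iH) IV.
move=> B FB; have mB := Fsig_meas (ltnW i_lt_n) FB.
rewrite (cond_exp_Rintegral (HU iH) FB) RintegralD //; last 2 first.
- exact: integrableS (IX iH).
- exact: integrableS IV.
rewrite (cond_exp_Rintegral (HV i1H) FB) -RintegralD //; last 2 first.
- exact: integrableS (IX iH).
- exact: integrableS Itail.
by apply: eq_Rintegral => w _; rewrite tailsum_recl // ltnW.
Qed.

Lemma doob_U_last : (0 < n)%N -> {ae P, forall w, U n w = X n w}.
Proof.
move=> n_gt0; have nH : (1 <= n <= n)%N by rewrite n_gt0 leqnn.
have [mU IU _ _] := HU nH.
apply: (ae_eq_of_Rintegral_eq (Fsig_meas (leqnn n))).
- exact/F_measurableP.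
- exact: measurable_Xi_Fspace.
- exact: IU.
- exact: IX.
move=> B FB; rewrite (cond_exp_Rintegral (HU nH) FB).
by apply: eq_Rintegral => w _; rewrite /tailsum big_nat1.
Qed.

Lemma doob_V_first : (0 < n)%N ->
  {ae P, forall w, V 1%N w = fine ('E_P[fun x => \sum_(1 <= i < n.+1) X i x])}.
Proof.
move=> n_gt0; have iH : (1 <= 1 <= n)%N by rewrite n_gt0.
have [mV IV _ _] := HV iH.
apply: (ae_eq_of_Rintegral_eq (Fsig_meas (leq0n n))).
- exact/F_measurableP.
- exact: measurable_cst.
- exact: IV.
- exact: finite_measure_integrable_cst.
move=> B /Fsig0 [->|->]; first by rewrite !Rintegral_set0.
rewrite (cond_exp_Rintegral (HV iH) (@measurableT _ (Fspace X 0))).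
rewrite Rintegral_cst // (_ : fine (P setT) = 1) ?mulr1; last first.
  by rewrite probability_setT.
by rewrite /Rintegral unlock.
Qed.

Lemma doob_decomposition : {ae P, forall w, \sum_(1 <= i < n.+1) X i w
    - fine ('E_P[fun x => \sum_(1 <= i < n.+1) X i x])
    = \sum_(1 <= i < n.+1) (U i w - V i w)}.
Proof.
have [->|n_gt0] := posnP n.
  apply: aeW => w; rewrite !big_geq // unlock integral0_eq /= ?subr0 // => x _.
  by rewrite big_geq.
have U_step := ae_forall_nat_in (fun l (lH : (1 <= l < n)%N) => doob_U_step lH).
apply: filterS3 U_step (doob_U_last n_gt0) (doob_V_first n_gt0) => w Uw Unw V1w.
exact: telescope_increments.
Qed.

Section increment_bound.
Variables (L delta K A : R) (N i : nat).
Hypothesis L_ge0 : 0 <= L.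
Hypotheses (delta_gt0 : 0 < delta) (K_gt0 : 0 < K).
Hypothesis A_ge : 1 + n%:R * (L / N%:R) <= A.
Hypothesis i_range : (1 <= i <= n)%N.
Hypothesis Xi_mgf : exists Y : T -> R,
  is_cond_exp P (Fsig X i.-1) (fun w => expR (delta * A * `|X i w|)) Y /\
  {ae P, forall w, Y w <= K}.
Variable h : nat -> i.-tuple R -> R.
Hypothesis h_meas : forall l, measurable_fun setT (h l).
Hypothesis h_cond_exp : forall l, (i < l <= n)%N ->
  is_cond_exp P (Fsig X i) (X l) (fun w => h l (vecX X i w)).
Hypothesis h_lipschitz : forall l, (i < l <= n)%N ->
  {ae P, forall w,
     `|h l (vecX X i w) - h l (vecX0 X i w)| <= L * `|X i w| / N%:R}.

Let i_ge1 : (1 <= i)%N. Proof. by case/andP: i_range. Qed.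
Let i_le_n : (i <= n)%N. Proof. by case/andP: i_range. Qed.
Let Fsig_i : Fsig X i `<=` measurable. Proof. exact: Fsig_meas. Qed.
Let Fsig_ip : Fsig X i.-1 `<=` measurable.
Proof. exact: Fsig_meas (leq_trans (leq_pred i) i_le_n). Qed.
Let IXi : P.-integrable setT (EFin \o X i). Proof. exact: IX. Qed.
Let IV : P.-integrable setT (EFin \o V i). Proof. by case: (HV i_range). Qed.
Let Itail1 : P.-integrable setT (EFin \o tailsum X i.+1 n).
Proof. exact: integrable_tailsum. Qed.
Let integrable_subT B f : measurable B ->
  P.-integrable setT (EFin \o f) -> P.-integrable B (EFin \o f).
Proof. by move=> mB If; apply: integrableS If. Qed.

(* [Hs] is a version of [E_i (X_{i+1} + ... + X_n)]. *)
Let Hs w := \sum_(i.+1 <= l < n.+1) h l (vecX X i w).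
Let H0 w := \sum_(i.+1 <= l < n.+1) h l (vecX0 X i w).
Let Z w := X i w + (Hs w - H0 w).
Let W w := V i w - H0 w.

Let integrable_h_vecX l : (i < l <= n)%N ->
  P.-integrable setT (EFin \o (fun w => h l (vecX X i w))).
Proof. by case/h_cond_exp. Qed.

Let measurable_h_vecX0 l :
  measurable_fun [set: Fspace X i.-1] (fun w => h l (vecX0 X i w)).
Proof. by apply: measurableT_comp; [exact: h_meas|exact: measurable_vecX0]. Qed.

Let integrable_h_vecX0 l : (i < l <= n)%N ->
  P.-integrable setT (EFin \o (fun w => h l (vecX0 X i w))).
Proof.
move=> lH; apply: (integrable_ae_dominated
  (g := fun w => `|h l (vecX X i w)| + L / N%:R * `|X i w|)).
- exact: measurable_fun_sub_sigma Fsig_ip _ (measurable_h_vecX0 l).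
- apply: filterS (h_lipschitz lH) => w hw.
  rewrite -[X in `|X|](subKr (h l (vecX X i w))) (le_trans (ler_normB _ _)) //.
  by rewrite lerD2l mulrAC.
- apply: integrable_EFinD => //.
    exact: integrable_norm (integrable_h_vecX lH).
  by apply: integrable_EFinZ => //; exact: integrable_norm.
Qed.

Let IHs : P.-integrable setT (EFin \o Hs).
Proof.
by apply: integrable_EFin_sum => // l; rewrite mem_index_iota; exact: integrable_h_vecX.
Qed.

Let IH0 : P.-integrable setT (EFin \o H0).
Proof.
apply: integrable_EFin_sum => // l.
by rewrite mem_index_iota; exact: integrable_h_vecX0.
Qed.

Let IZ : P.-integrable setT (EFin \o Z).
Proof. by apply: integrable_EFinD => //; exact: integrable_EFinB. Qed.

Let IW : P.-integrable setT (EFin \o W).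
Proof. exact: integrable_EFinB. Qed.

Lemma Rintegral_Hs B : Fsig X i B ->
  \int[P]_(x in B) Hs x = \int[P]_(x in B) tailsum X i.+1 n x.
Proof.
move=> FB; have mB := Fsig_i FB.
rewrite /Hs /tailsum !Rintegral_sum //; last 2 first.
- move=> l; rewrite mem_index_iota => /andP[il ln]; apply: integrable_subT => //.
  by apply: IX; rewrite (leq_trans i_ge1 (ltnW il)) -ltnS.
- move=> l; rewrite mem_index_iota => lH.
  exact: integrable_subT (integrable_h_vecX lH).
apply: eq_big_seq => l; rewrite mem_index_iota => lH.
exact: cond_exp_Rintegral (h_cond_exp lH) FB.
Qed.

Lemma U_eq_X_add_Hs : {ae P, forall w, U i w = X i w + Hs w}.
Proof.
have [mU IU _ _] := HU i_range.
apply: (ae_eq_of_Rintegral_eq Fsig_i).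
- exact/F_measurableP.
- apply: measurable_funD; first exact: measurable_Xi_Fspace.
  apply: measurable_sum => l.
  by apply: measurableT_comp; [exact: h_meas|exact: measurable_vecX].
- exact: IU.
- exact: integrable_EFinD.
move=> B FB; have mB := Fsig_i FB.
rewrite (cond_exp_Rintegral (HU i_range) FB).
rewrite (RintegralD mB (integrable_subT mB IXi) (integrable_subT mB IHs)).
rewrite (Rintegral_Hs FB).
rewrite -(RintegralD mB (integrable_subT mB IXi) (integrable_subT mB Itail1)).
by apply: eq_Rintegral => w _; rewrite tailsum_recl.
Qed.

Lemma norm_Z_le : {ae P, forall w, `|Z w| <= A * `|X i w|}.
Proof.
have := ae_forall_nat_in (fun l (lH : (i.+1 <= l < n.+1)%N) => h_lipschitz lH).
apply: filterS => w hw.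
have HsH0 : `|Hs w - H0 w| <= n%:R * (L / N%:R) * `|X i w|.
  rewrite /Hs /H0 -sumrB (le_trans (ler_norm_sum _ _ _)) //.
  apply: le_trans (ler_sum_nat hw) _.
  rewrite sumr_const_nat subSS -(mulr_natl (L * `|X i w| / N%:R) (n - i)).
  have -> : (n - i)%:R * (L * `|X i w| / N%:R) =
      (n - i)%:R * (L / N%:R) * `|X i w| by ring.
  apply: ler_wpM2r => //; apply: ler_wpM2r; first by rewrite divr_ge0.
  by rewrite ler_nat leq_subr.
rewrite (le_trans (ler_normD _ _)) // (le_trans (lerD (lexx _) HsH0)) //.
by rewrite -{1}(mul1r `|X i w|) -mulrDl; apply: ler_wpM2r.
Qed.

Lemma Rintegral_W_eq_Z B : Fsig X i.-1 B ->
  \int[P]_(x in B) W x = \int[P]_(x in B) Z x.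
Proof.
move=> FB; have FiB : Fsig X i B by exact: Fsig_mono (leq_pred i) _ FB.
have mB := Fsig_i FiB.
have IHsH0 := integrable_EFinB measurableT IHs IH0.
rewrite (RintegralB mB (integrable_subT mB IV) (integrable_subT mB IH0)).
rewrite (RintegralD mB (integrable_subT mB IXi) (integrable_subT mB IHsH0)).
rewrite (RintegralB mB (integrable_subT mB IHs) (integrable_subT mB IH0)).
rewrite (Rintegral_Hs FiB) (cond_exp_Rintegral (HV i_range) FB).
rewrite (@eq_Rintegral _ _ _ P B (fun w => X i w + tailsum X i.+1 n w)).
  rewrite (RintegralD mB (integrable_subT mB IXi) (integrable_subT mB Itail1)).
  by rewrite addrA.
by move=> w _; rewrite tailsum_recl.
Qed.

Lemma expR_W_le : {ae P, forall w, expR (delta * `|W w|) <= K}.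
Proof.
have [Y [YH Y_le]] := Xi_mgf; have [_ IY Ieg _] := YH.
have Ieg' : P.-integrable setT (EFin \o (fun w => expR (delta * (A * `|X i w|)))).
  by apply: (eq_integrable _ _ _ _ Ieg) => // w _ /=; rewrite mulrA.
have Y_cond : forall B, Fsig X i.-1 B ->
    \int[P]_(x in B) Y x = \int[P]_(x in B) expR (delta * (A * `|X i x|)).
  move=> B FB; rewrite (cond_exp_Rintegral YH FB).
  by apply: eq_Rintegral => w _; rewrite mulrA.
have mW : measurable_fun [set: Fspace X i.-1] W.
  apply: measurable_funB; first by apply/F_measurableP; case: (HV i_range).
  exact: measurable_sum.
exact: (cond_exp_expR_norm_le Fsig_ip delta_gt0 K_gt0 IY Ieg' Y_cond Y_le
  mW IW IZ norm_Z_le Rintegral_W_eq_Z).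
Qed.

Lemma expR_increment_le : {ae P, forall w,
  expR (delta * `|U i w - V i w|) <= K * expR (delta * A * `|X i w|)}.
Proof.
apply: filterS3 U_eq_X_add_Hs norm_Z_le expR_W_le => w Uw Zw Ww.
have -> : U i w - V i w = Z w - W w by rewrite Uw /Z /W; ring.
rewrite [leRHS]mulrC; apply: le_trans (ler_wpM2l (ltW (expR_gt0 _)) Ww).
rewrite -expRD ler_expR -mulrA -mulrDr ler_pM2l //.
by rewrite (le_trans (ler_normB _ _)) // lerD2r.
Qed.

Lemma integrable_expR_increment :
  P.-integrable setT (EFin \o (fun w => expR (delta * `|U i w - V i w|))).
Proof.
have [Y [[_ _ Ieg _] _]] := Xi_mgf.
apply: (integrable_ae_dominated _ _ (integrable_EFinZ measurableT K Ieg)).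
  have [mU _ _ _] := HU i_range; have [mV _ _ _] := HV i_range.
  apply: measurableT_comp; first exact: measurable_expR.
  apply: measurable_funM; first exact: measurable_cst.
  apply: measurableT_comp; first exact: normr_measurable.
  apply: measurable_funB.
    by apply: measurable_fun_sub_sigma Fsig_i _ _; apply/F_measurableP.
  by apply: measurable_fun_sub_sigma Fsig_ip _ _; apply/F_measurableP.
by apply: filterS expR_increment_le => w; rewrite (ger0_norm (expR_ge0 _)).
Qed.

Lemma expR_increment_cond_exp_le Y :
  is_cond_exp P (Fsig X i.-1) (fun w => expR (delta * `|U i w - V i w|)) Y ->
  {ae P, forall w, Y w <= K ^+ 2}.
Proof.
move=> YH; have [mY IY _ _] := YH.
have [Y0 [Y0H Y0_le]] := Xi_mgf; have [_ IY0 Ieg _] := Y0H.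
apply: (ae_le_of_Rintegral_le Fsig_ip).
- exact/F_measurableP.
- exact: measurable_cst.
- exact: IY.
- exact: finite_measure_integrable_cst.
move=> B FB; have mB := Fsig_ip FB.
have IKeg := integrable_EFinZ measurableT K Ieg.
rewrite (cond_exp_Rintegral YH FB).
apply: le_trans (ae_le_Rintegral mB (integrable_subT mB integrable_expR_increment)
  (integrable_subT mB IKeg) expR_increment_le) _.
rewrite RintegralZl ?(integrable_subT mB Ieg) // -(cond_exp_Rintegral Y0H FB).
rewrite Rintegral_cst // expr2 -mulrA; apply: ler_wpM2l; first exact: ltW.
rewrite -Rintegral_cst //.
apply: (ae_le_Rintegral mB (integrable_subT mB IY0)) => //.
exact: finite_measure_integrable_cst.
Qed.

End increment_bound.

Lemma increment_expR_bound L delta K A N i :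
  0 <= L -> 0 < delta -> 0 < K ->
  1 + n%:R * (L / N%:R) <= A -> (1 <= i <= n)%N ->
  (exists Y : T -> R,
     is_cond_exp P (Fsig X i.-1) (fun w => expR (delta * A * `|X i w|)) Y /\
     {ae P, forall w, Y w <= K}) ->
  (forall l, (i < l <= n)%N -> exists h : i.-tuple R -> R,
     [/\ measurable_fun setT h,
         is_cond_exp P (Fsig X i) (X l) (fun w => h (vecX X i w)) &
         {ae P, forall w,
            `|h (vecX X i w) - h (vecX0 X i w)| <= L * `|X i w| / N%:R}]) ->
  P.-integrable setT (EFin \o (fun w => expR (delta * `|U i w - V i w|))) /\
  forall Y : T -> R,
    is_cond_exp P (Fsig X i.-1) (fun w => expR (delta * `|U i w - V i w|)) Y ->
    {ae P, forall w, Y w <= K ^+ 2}.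
Proof.
move=> L_ge0 delta_gt0 K_gt0 A_ge iH Xi_mgf Hh.
have h_ex l : exists h : i.-tuple R -> R,
    measurable_fun setT h /\ ((i < l <= n)%N ->
    is_cond_exp P (Fsig X i) (X l) (fun w => h (vecX X i w)) /\
    {ae P, forall w, `|h (vecX X i w) - h (vecX0 X i w)| <= L * `|X i w| / N%:R}).
  have [lH|_] := boolP (i < l <= n)%N.
    by have [h [mh h_ce h_lip]] := Hh l lH; exists h.
  by exists (fun _ => 0); split => //; exact: measurable_cst.
have [h hH] := choice h_ex.
have h_meas l := (hH l).1.
have h_cond_exp l (lH : (i < l <= n)%N) := ((hH l).2 lH).1.
have h_lipschitz l (lH : (i < l <= n)%N) := ((hH l).2 lH).2.
split.
  exact: (integrable_expR_increment L_ge0 delta_gt0 K_gt0 A_ge iH Xi_mgf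
    h_meas h_cond_exp h_lipschitz).
exact: (expR_increment_cond_exp_le L_ge0 delta_gt0 K_gt0 A_ge iH Xi_mgf
  h_meas h_cond_exp h_lipschitz).
Qed.

End doob_decomposition.

Theorem mainTheorem3 (d : measure_display) (T : measurableType d)
  (R : realType) (P : probability T R) (X : nat -> T -> R)
  (n N M : nat) (L delta K : R) :
  (forall i, (1 <= i <= n)%N -> measurable_fun setT (X i)) ->
  (forall i, (1 <= i <= n)%N -> P.-integrable setT (EFin \o X i)) ->
  (0 < N)%N -> (0 < M)%N -> (n <= M)%N ->
  0 <= L -> 0 < delta -> 0 < K ->
  let A := 1 + L * M%:R / N%:R in
  (forall i l, (1 <= i)%N -> (i < l <= n)%N ->
     exists h : i.-tuple R -> R,
       [/\ measurable_fun setT h,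
           is_cond_exp P (Fsig X i) (X l) (fun w => h (vecX X i w)) &
           {ae P, forall w,
              `|h (vecX X i w) - h (vecX0 X i w)| <= L * `|X i w| / N%:R}]) ->
  (forall i, (1 <= i <= n)%N ->
     exists Y : T -> R,
       is_cond_exp P (Fsig X i.-1) (fun w => expR (delta * A * `|X i w|)) Y /\
       {ae P, forall w, Y w <= K}) ->
  forall U V : nat -> T -> R,
  (forall i, (1 <= i <= n)%N -> is_cond_exp P (Fsig X i) (tailsum X i n) (U i)) ->
  (forall i, (1 <= i <= n)%N -> is_cond_exp P (Fsig X i.-1) (tailsum X i n) (V i)) ->
  let dd := fun i w => U i w - V i w in
  [/\ (forall i, (1 <= i <= n)%N -> is_cond_exp P (Fsig X i.-1) (dd i) (fun _ => 0)),
      {ae P, forall w, \sum_(1 <= i < n.+1) X i w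
                         - fine ('E_P[fun x => \sum_(1 <= i < n.+1) X i x])
                       = \sum_(1 <= i < n.+1) dd i w} &
      (forall i, (1 <= i <= n)%N ->
         P.-integrable setT (EFin \o (fun w => expR (delta * `|dd i w|))) /\
         forall Y : T -> R,
           is_cond_exp P (Fsig X i.-1) (fun w => expR (delta * `|dd i w|)) Y ->
           {ae P, forall w, Y w <= K ^+ 2})].
Proof.
move=> mX IX _ _ n_le_M L_ge0 delta_gt0 K_gt0 A Hh HY U V HU HV dd; rewrite {}/dd.
have A_ge : 1 + n%:R * (L / N%:R) <= A.
  rewrite /A lerD2l mulrA [_ * L]mulrC ler_wpM2r ?invr_ge0 //.
  by rewrite ler_wpM2l // ler_nat.
split.
- move=> i iH; exact (doob_increment_cond_exp0 mX HU HV iH).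
- exact (doob_decomposition mX IX HU HV).
- move=> i iH; have /andP[i_ge1 _] := iH.
  exact (increment_expR_bound mX IX HU HV L_ge0 delta_gt0 K_gt0 A_ge iH
    (HY i iH) (fun l => Hh i l i_ge1)).
Qed.
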